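(* Let $L$ be a finite flag complex of dimension $k$, let $M\in Z_k(L;\mathbb{Z}/2)$ be a $k$-cycle (identified with its support), and let $\Delta$ be any $k$-simplex of $M$. Then $(M,\Delta)$ satisfies the $*$-condition: for all $k$-simplices $\sigma,\tau$ of $M$ such that every vertex of $\Delta$ lies in $\sigma\cup\tau$, one has $\sigma\cap\tau\subset\Delta$.
   Context: A flag complex is a simplicial complex in which every finite set of pairwise adjacent vertices spans a simplex. *)

From mathcomp Require Import all_boot.
Set Implicit Arguments. Unset Strict Implicit. Unset Printing Implicit Defensive.

Definition simplicial_complex (V : finType) (L : {set {set V}}) : Prop :=
  (forall s, s \in L -> s != set0) /\
  (forall s t : {set V}, s \in L -> t \subset s -> t != set0 -> t \in L).

(* Flag: every finite nonempty set of pairwise adjacent vertices spans a simplex.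
   (u = v gives [set u] \in L, i.e. all members are vertices of L.) *)
Definition flag_complex (V : finType) (L : {set {set V}}) : Prop :=
  simplicial_complex L /\
  (forall A : {set V}, A != set0 ->
     (forall u v, u \in A -> v \in A -> [set u; v] \in L) -> A \in L).

Definition has_dim (V : finType) (L : {set {set V}}) (k : nat) : Prop :=
  (exists2 s, s \in L & #|s| = k.+1) /\ (forall s, s \in L -> #|s| <= k.+1).

(* A k-cycle of L with Z/2 coefficients, identified with its support M:
   a set of k-simplices of L whose mod-2 boundary vanishes, i.e. every
   (k-1)-simplex of L is a face of an even number of members of M. *)
Definition Z2_cycle (V : finType) (L : {set {set V}}) (k : nat)
    (M : {set {set V}}) : Prop :=
  M \subset L /\ (forall s, s \in M -> #|s| = k.+1) /\
  (forall F, F \in L -> #|F| = k -> ~~ odd #|[set s in M | F \subset s]|).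

Definition star_condition (V : finType) (M : {set {set V}}) (D : {set V}) : Prop :=
  forall sigma tau, sigma \in M -> tau \in M ->
    D \subset sigma :|: tau -> sigma :&: tau \subset D.

From mathcomp Require Import all_boot.

Set Implicit Arguments.
Unset Strict Implicit.
Unset Printing Implicit Defensive.

(* If a vertex v of sigma :&: tau were outside Delta, then v would be adjacent
   to every vertex of Delta, since each of them lies in sigma or in tau.  By the
   flag property v |: Delta would then be a simplex with one vertex more than
   the top-dimensional simplex Delta. *)

Section FlagComplex.

Variables (V : finType) (L : {set {set V}}).

Lemma simplex_edge_mem s u w :
  simplicial_complex L -> s \in L -> u \in s -> w \in s -> [set u; w] \in L.
Proof.
move=> [_ subL] sL us ws; apply: (subL s) => //.
  by apply/subsetP => y /set2P [] ->.
by apply/set0Pn; exists u; rewrite set21.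
Qed.

Lemma flag_setU1_mem D v :
  flag_complex L -> D \in L -> [set v] \in L ->
  (forall u, u \in D -> [set v; u] \in L) -> v |: D \in L.
Proof.
move=> [cL flagL] DL vL vD; apply: flagL; first by apply/set0Pn; exists v; rewrite setU11.
move=> u w /setU1P [->|uD] /setU1P [->|wD].
- by rewrite setUid.
- exact: vD.
- by rewrite setUC; apply: vD.
- exact: (simplex_edge_mem cL DL).
Qed.

Lemma star_condition_of_max_simplex (M : {set {set V}}) D :
  flag_complex L -> M \subset L -> D \in L ->
  (forall s, s \in L -> #|s| <= #|D|) -> star_condition M D.
Proof.
move=> flagL ML DL maxD s t sM tM Dst.
have [sL tL] := (subsetP ML s sM, subsetP ML t tM).
apply/subsetP => v /setIP [vs vt]; apply/negPn/negP => vD.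
have vL : [set v] \in L by rewrite -[[set v]]setUid (simplex_edge_mem flagL.1 sL).
have vDL : v |: D \in L.
  apply: flag_setU1_mem => // u uD.
  have /setUP [us|ut] := subsetP Dst u uD.
  - exact: (simplex_edge_mem flagL.1 sL).
  - exact: (simplex_edge_mem flagL.1 tL).
by have := maxD _ vDL; rewrite cardsU1 vD ltnn.
Qed.

End FlagComplex.

Theorem mainTheorem12 (V : finType) (L : {set {set V}}) (k : nat)
    (M : {set {set V}}) (D : {set V}) :
  flag_complex L -> has_dim L k -> Z2_cycle L k M -> D \in M ->
  star_condition M D.
Proof.
move=> flagL [_ dimL] [ML [cardM _]] DM.
have DL : D \in L := subsetP ML D DM.
apply: (star_condition_of_max_simplex flagL ML DL) => s sL.
by rewrite (cardM D DM) dimL.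
Qed.
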